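(* Let $(X,\tau)$ be a topological space where $X$ is an uncountable set. If $\tau\subseteq\mathcal{C}(X)$, where $\mathcal{C}(X)=\{A\subseteq X: A\text{ is countable or } X\setminus A \text{ is countable}\}$, then every discrete subset of $X$ (discrete in the subspace topology) is countable. *)

From HB Require Import structures.
From mathcomp Require Import all_boot all_order.
From mathcomp Require Import boolp classical_sets cardinality topology.
Set Implicit Arguments. Unset Strict Implicit. Unset Printing Implicit Defensive.
Local Open Scope classical_set_scope.

Definition cocountable_sets (T : Type) : set (set T) :=
  [set A | countable A \/ countable (~` A)].

Definition discrete_subset (T : topologicalType) (D : set T) : Prop :=
  forall x, D x -> exists U : set T, open U /\ U `&` D = [set x].

From HB Require Import structures.
From mathcomp Require Import all_boot all_order.
From mathcomp Require Import boolp classical_sets cardinality topology.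
Set Implicit Arguments. Unset Strict Implicit. Unset Printing Implicit Defensive.
Local Open Scope classical_set_scope.

(* An uncountable set D splits into two uncountable halves: by Zorn's lemma
   there is a maximal set of ordered pairs of points of D in which every point
   occurs at most once; by maximality at most one point of D is left unpaired,
   so this set of pairs is uncountable, and its first and second coordinates
   are the two halves.  If D is discrete, the union of isolating open sets of
   the points of one half is open and meets D in exactly that half; being
   countable or co-countable, it forces one of the halves to be countable. *)

Lemma countableU (T : Type) (A B : set T) :
  countable A -> countable B -> countable (A `|` B).
Proof.
move=> cA cB.
have -> : A `|` B = \bigcup_(b in [set: bool]) (if b then A else B).
  apply/seteqP; split=> x.
    by case=> Ax; [exists true | exists false].
  by case=> -[] _ /= Bx; [left | right].
by apply: bigcup_countable => [|[]]; first exact: countableP.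
Qed.

Lemma subsingleton_countable (T : Type) (A : set T) :
  (forall x y, A x -> A y -> x = y) -> countable A.
Proof.
move=> A1; have [[x Ax]|A0] := pselect (exists x, A x).
  apply: (sub_countable _ (countable1 x)); apply: subset_card_le => y Ay.
  exact: A1.
suff -> : A = set0 by exact: countable0.
by apply/seteqP; split=> // y Ay; apply: A0; exists y.
Qed.

Definition pairing (T : Type) (D : set T) (R : set (T * T)) : Prop :=
  [/\ R `<=` D `*` D, {in R &, injective fst}, {in R &, injective snd} &
      forall p q, R p -> R q -> p.1 <> q.2].

Definition pairing_support (T : Type) (R : set (T * T)) : set T :=
  fst @` R `|` snd @` R.

Section Pairing.
Variables (T : Type) (D : set T).

Lemma pairing_bigcup (F : set (set (T * T))) :
  F `<=` pairing D -> total_on F subset -> pairing D (\bigcup_(R in F) R).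
Proof.
move=> Fpairing Ftotal.
have common p q : (\bigcup_(R in F) R) p -> (\bigcup_(R in F) R) q ->
    exists2 R, F R & R p /\ R q.
  move=> [R FR Rp] [S FS Sq].
  have [RS|SR] := Ftotal _ _ FR FS.
    by exists S => //; split=> //; apply: RS.
  by exists R => //; split=> //; apply: SR.
split.
- by move=> p [R /Fpairing[RD _ _ _] /RD].
- move=> p q /set_mem Pp /set_mem Pq.
  have [R /Fpairing[_ injR _ _] [Rp Rq]] := common _ _ Pp Pq.
  exact: injR (mem_set Rp) (mem_set Rq).
- move=> p q /set_mem Pp /set_mem Pq.
  have [R /Fpairing[_ _ injR _] [Rp Rq]] := common _ _ Pp Pq.
  exact: injR (mem_set Rp) (mem_set Rq).
- move=> p q Pp Pq.
  have [R /Fpairing[_ _ _ disjR] [Rp Rq]] := common _ _ Pp Pq.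
  exact: disjR.
Qed.

Lemma exists_maximal_pairing :
  exists R, pairing D R /\ forall S, R `<` S -> ~ pairing D S.
Proof. by apply: Zorn_bigcup => F; exact: pairing_bigcup. Qed.

Lemma pairingU1 (R : set (T * T)) (x y : T) :
  pairing D R -> D x -> D y -> x <> y ->
  ~ pairing_support R x -> ~ pairing_support R y ->
  pairing D (R `|` [set (x, y)]).
Proof.
move=> [RD inj1 inj2 disjR] Dx Dy xy nRx nRy.
have xR1 p : R p -> p.1 <> x by move=> Rp px; apply: nRx; left; exists p.
have xR2 p : R p -> p.2 <> x by move=> Rp px; apply: nRx; right; exists p.
have yR1 p : R p -> p.1 <> y by move=> Rp py; apply: nRy; left; exists p.
have yR2 p : R p -> p.2 <> y by move=> Rp py; apply: nRy; right; exists p.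
split.
- by move=> p [/RD|->].
- move=> p q /set_mem[Rp|->] /set_mem[Rq|->] //= pq.
  + exact: inj1 (mem_set Rp) (mem_set Rq) pq.
  + by case: (xR1 _ Rp).
  + by case: (xR1 _ Rq).
- move=> p q /set_mem[Rp|->] /set_mem[Rq|->] //= pq.
  + exact: inj2 (mem_set Rp) (mem_set Rq) pq.
  + by case: (yR2 _ Rp).
  + by case: (yR2 _ Rq).
- move=> p q [Rp|->] [Rq|->] /=.
  + exact: disjR.
  + exact: yR1.
  + by move=> xq; apply: (xR2 _ Rq); rewrite xq.
  + exact: xy.
Qed.

Lemma maximal_pairing_countable (R : set (T * T)) :
  pairing D R -> (forall S, R `<` S -> ~ pairing D S) ->
  countable R -> countable D.
Proof.
move=> pairR maxR cR.
have cS : countable (pairing_support R).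
  by apply: countableU; exact: sub_countable (card_image_le _ _) cR.
have unpaired1 x y : (D `\` pairing_support R) x ->
    (D `\` pairing_support R) y -> x = y.
  move=> [Dx nRx] [Dy nRy]; apply: contrapT => xy.
  apply: (maxR (R `|` [set (x, y)])); last exact: pairingU1.
  split; first exact: subsetUl.
  by move=> sub; apply: nRx; left; exists (x, y) => //; apply: sub; right.
apply: (sub_countable _ (countableU cS (subsingleton_countable unpaired1))).
apply: subset_card_le => x Dx.
by have [Sx|nSx] := pselect (pairing_support R x); [left | right].
Qed.

End Pairing.

Lemma uncountable_split (T : Type) (D : set T) : ~ countable D ->
  exists2 S, S `<=` D & ~ countable S /\ ~ countable (D `\` S).
Proof.
move=> uD; have [R [pairR maxR]] := exists_maximal_pairing D.
have uR : ~ countable R by move/(maximal_pairing_countable pairR maxR).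
case: (pairR) => RD inj1 inj2 disjR.
exists (fst @` R); first by move=> _ [p /RD[Dp1 _] <-].
split; first by rewrite (eq_countable (inj_card_eq inj1)).
move=> cDR; apply: uR; rewrite -(eq_countable (inj_card_eq inj2)).
apply: sub_countable cDR; apply: subset_card_le => _ [p Rp <-].
split; first by have [] := RD p Rp.
by move=> [q Rq]; exact: disjR.
Qed.

Lemma discrete_subset_trace (T : topologicalType) (D S : set T) :
  discrete_subset D -> S `<=` D -> exists2 V, open V & V `&` D = S.
Proof.
move=> Ddisc SD.
pose I := [set U : set T | open U /\ exists2 x, S x & U `&` D = [set x]].
exists (\bigcup_(U in I) U); first by apply: bigcup_open => U [].
apply/seteqP; split.
  move=> y [[U [_ [x Sx UD]] Uy] Dy].
  by have : (U `&` D) y by []; rewrite UD => ->.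
move=> x Sx; have [U [oU UD]] := Ddisc x (SD x Sx).
have [Ux Dx] : (U `&` D) x by rewrite UD.
by split=> //; exists U => //; split=> //; exists x.
Qed.

Lemma cocountable_trace (T : Type) (V D S : set T) :
  cocountable_sets V -> V `&` D = S -> countable S \/ countable (D `\` S).
Proof.
move=> [cV|cV] VDS; [left | right]; apply: sub_countable cV.
  by apply: subset_card_le; rewrite -VDS => x [].
by apply: subset_card_le => x [Dx nSx] Vx; apply: nSx; rewrite -VDS.
Qed.

Theorem lemma3p7 (T : topologicalType) :
  ~ countable [set: T] ->
  (forall A : set T, open A -> cocountable_sets A) ->
  forall D : set T, discrete_subset D -> countable D.
Proof.
move=> _ open_cocountable D Ddisc; apply: contrapT => uD.
have [S SD [uS uDS]] := uncountable_split uD.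
have [V oV VDS] := discrete_subset_trace Ddisc SD.
by have [] := cocountable_trace (open_cocountable V oV) VDS.
Qed.
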